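(* In the univariate contact-tracing model (described in the context), if $\alpha=\beta>0$, then for every $T\in\mathbb{N}$, every probability distribution $D$ on $\{0,1,2,\dots\}$ and every $p_T\in(0,1]$, every policy is optimal; that is, from any initial frontier, all policies achieve the same expected total benefit.
   Context: Univariate model. Fix $T\in\mathbb{N}$, a probability distribution $D$ on $\{0,1,2,\dots\}$, constants $p_T\in(0,1]$, $\alpha\ge 0$, and a discount parameter $\beta>0$. Every node has a recency $h\in\{0,1,\dots,T\}$. Each node (index case or child of an infected node) of recency $h$ is infected independently with probability $p(h)=p_T e^{-\alpha(T-h)}$. If a node of recency $h$ is infected, then for each $j\in\{0,\dots,h-1\}$ it has $Z_j\sim D$ children of recency $j$, all counts independent across $j$ and across nodes and independent of infection statuses. Contact tracing: at step $t=0$ the frontier is a given finite multiset of index cases with known recencies. At each step $t=0,1,2,\dots$ while the frontier is nonempty, the tracer selects one frontier node and queries it, removing it from the frontier. The query reveals its infection status; if it is infected and has recency $h$, benefit $e^{-\beta(h+t)}$ is collected and its children (with their recencies) are added to the frontier; otherwise benefit $0$ is collected and nothing is added. A policy is a (possibly history-dependent) rule choosing at each step which frontier node to query. A policy is optimal if for every initial frontier it maximizes the expected total collected benefit over all policies. *)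

From mathcomp Require Import all_boot all_order all_algebra.
From mathcomp Require Import all_classical all_reals all_analysis.
Set Implicit Arguments. Unset Strict Implicit. Unset Printing Implicit Defensive.
Import Order.TTheory GRing.Theory Num.Theory.
Local Open Scope classical_set_scope.
Local Open Scope ring_scope.

Section Model.
Variable R : realType.

(* An event of the history: (frontier before the query, queried index,
   outcome).  Outcome None = not infected; Some z = infected, with
   z = [:: Z_0; ...; Z_{h-1}] the numbers of children of each recency. *)
Definition event := (seq nat * nat * option (seq nat))%type.

(* A (deterministic, history-dependent) policy: given the history so far
   and the current frontier (a list of recencies), returns the index of the
   frontier node to query.  The current step t is the length of the history. *)
Definition policy := seq event -> seq nat -> nat.

Definition valid_policy (pi : policy) : Prop :=
  forall (H : seq event) (F : seq nat), F != [::] -> (pi H F < size F)%N.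

Definition prob_distr (D : nat -> R) : Prop :=
  (forall n, 0 <= D n) /\ (\esum_(n in [set: nat]) (D n)%:E = 1)%E.

Definition pinf (T : nat) (pT alpha : R) (h : nat) : R :=
  pT * expR (- (alpha * (T%:R - h%:R))).

Definition remove_at (i : nat) (F : seq nat) : seq nat :=
  take i F ++ drop i.+1 F.

Definition children (z : seq nat) : seq nat :=
  flatten [seq nseq (nth 0%N z j) j | j <- iota 0 (size z)].

Definition cweight (D : nat -> R) (z : seq nat) : R :=
  \prod_(j <- z) D j.

(* Expected benefit collected during the first n steps, under policy pi,
   given history hist and current frontier F (current step = size hist). *)
Fixpoint Vn (T : nat) (D : nat -> R) (pT alpha beta : R) (pi : policy)
  (n : nat) (hist : seq event) (F : seq nat) {struct n} : \bar R :=
  match n with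
  | 0%N => 0%E
  | n'.+1 =>
    match F with
    | [::] => 0%E
    | _ :: _ =>
      let i := pi hist F in
      let h := nth 0%N F i in
      let t := size hist in
      let F' := remove_at i F in
      let p := pinf T pT alpha h in
      ((1 - p)%:E * Vn T D pT alpha beta pi n' (rcons hist (F, i, None)) F'
       + p%:E *
         ((expR (- (beta * (h + t)%:R)))%:E
          + \esum_(z in [set z : seq nat | size z = h])
              ((cweight D z)%:E *
               Vn T D pT alpha beta pi n' (rcons hist (F, i, Some z))
                  (F' ++ children z))))%E
    end
  end.

(* Expected total collected benefit (infinite horizon), as the supremum
   (= monotone limit) of the finite-horizon expected benefits. *)
Definition value (T : nat) (D : nat -> R) (pT alpha beta : R) (pi : policy)
  (F : seq nat) : \bar R :=
  ereal_sup (range (fun n => Vn T D pT alpha beta pi n [::] F)).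

Definition optimal (T : nat) (D : nat -> R) (pT alpha beta : R)
  (pi : policy) : Prop :=
  valid_policy pi /\
  forall (F : seq nat), all (fun h => (h <= T)%N) F ->
  forall pi' : policy, valid_policy pi' ->
    (value T D pT alpha beta pi' F <= value T D pT alpha beta pi F)%E.

End Model.

(* When alpha = beta, querying a node of recency h at step t yields the expected
   immediate benefit p(h) e^{-beta (h + t)} = p_T e^{-beta (T + t)}, whatever h is.
   Hence querying two frontier nodes in either order gives the same expected
   benefit over the two steps, and leaves a frontier with the same distribution up
   to permutation, since the children counts of the two nodes are independent.
   By induction on the horizon, querying any node is then as good as querying the
   head of the frontier, so every policy has the finite-horizon values of the
   head-first policy. *)

From mathcomp Require Import all_boot all_order all_algebra.
From mathcomp Require Import all_classical all_reals all_analysis finmap.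
From mathcomp Require Import ring.
Set Implicit Arguments. Unset Strict Implicit. Unset Printing Implicit Defensive.
Import Order.TTheory GRing.Theory Num.Theory.
Local Open Scope classical_set_scope.
Local Open Scope ring_scope.

Section ERealComplements.
Variable R : realType.
Local Open Scope ereal_scope.

Lemma esumZl (T : choiceType) (I : set T) (a : T -> \bar R) (r : R) :
  (0 <= r)%R -> (forall i, I i -> 0 <= a i) ->
  \esum_(i in I) (r%:E * a i) = r%:E * \esum_(i in I) a i.
Proof.
move=> r0 a0; rewrite /esum -ereal_supZl //; last first.
  by apply/set0P; exists 0; exists set0; [exact: fsets_set0|rewrite fsbig_set0].
have sumZ A : finite_set A -> A `<=` I ->
    \sum_(i \in A) (r%:E * a i) = r%:E * \sum_(i \in A) a i.
  move=> finA AI; rewrite !fsbig_finite // [in RHS]big_seq ge0_sume_distrr -?big_seq //.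
  by move=> i; rewrite in_fset_set // => /set_mem/AI/a0.
congr ereal_sup; apply/seteqP; split => x /=.
- by move=> [A [finA AI] <-]; exists (\sum_(i \in A) a i); [exists A|rewrite sumZ].
- by move=> [y [A [finA AI] <-] <-]; exists A; rewrite ?sumZ.
Qed.

Lemma exchange_esum (T1 T2 : choiceType) (I : set T1) (J : set T2)
    (a : T1 -> T2 -> \bar R) : (forall i j, I i -> J j -> 0 <= a i j) ->
  \esum_(i in I) \esum_(j in J) a i j = \esum_(j in J) \esum_(i in I) a i j.
Proof.
move=> a0; rewrite esum_esum // esum_esum; last by move=> j i Jj Ii; apply: a0.
rewrite (reindex_esum (I `*` J) _ (fun p => (p.2, p.1))) //; split => /=.
- by move=> [x y] [/= ? ?].
- by move=> [x1 x2] [y1 y2] /= _ _ [-> ->].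
- by move=> [x y] [/= ? ?]; exists (y, x).
Qed.

Lemma nested_mixtureE (qa qb ea eb : R) (w Ga Gb K : \bar R) :
  (0 <= qa <= 1)%R -> (0 <= qb <= 1)%R -> (0 <= ea)%R -> (0 <= eb)%R ->
  0 <= w -> 0 <= Ga -> 0 <= Gb -> 0 <= K ->
  (1 - qa)%:E * ((1 - qb)%:E * w + qb%:E * (eb%:E + Gb)) +
  qa%:E * (ea%:E + ((1 - qb)%:E * Ga + qb%:E * (eb%:E + K))) =
  ((1 - qa) * (1 - qb))%:E * w + (qa * ea + qb * eb)%:E +
  ((1 - qa) * qb)%:E * Gb + (qa * (1 - qb))%:E * Ga + (qa * qb)%:E * K.
Proof.
move=> /andP[qa0 qa1] /andP[qb0 qb1] ea0 eb0 w0 Ga0 Gb0 K0.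
have qa'0 : (0 <= 1 - qa)%R by rewrite subr_ge0.
have qb'0 : (0 <= 1 - qb)%R by rewrite subr_ge0.
rewrite !ge0_muleDr ?adde_ge0 ?mule_ge0 ?lee_fin // !muleA -!EFinM.
rewrite [LHS](AC ((1*2)*(1*(1*2))) ((((1*(4*2*6))*3)*5)*7)) /= -!EFinD.
by do 4 congr (_ + _); congr _%:E; ring.
Qed.

End ERealComplements.

Section ChildCounts.
Variables (R : realType) (D : nat -> R).
Hypothesis D_ge0 : forall n, (0 <= D n)%R.
Hypothesis D_sum1 : (\esum_(n in [set: nat]) (D n)%:E = 1)%E.
Local Open Scope ereal_scope.

Definition counts (h : nat) : set (seq nat) := [set z | size z = h].

Definition cexpect (h : nat) (f : seq nat -> \bar R) : \bar R :=
  \esum_(z in counts h) ((cweight D z)%:E * f z).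

Lemma cweight_ge0 z : (0 <= cweight D z)%R.
Proof. exact: prodr_ge0. Qed.

Lemma counts0 : counts 0 = [set [::]].
Proof. by apply/seteqP; split => z /=; [move/size0nil|move=> ->]. Qed.

Lemma countsS h : counts h.+1 = (fun p => p.1 :: p.2) @` ([set: nat] `*` counts h).
Proof.
apply/seteqP; split => [[|n z] // [zh]|_ [[n z] [_ zh] <-]]; first by exists (n, z).
by rewrite /counts /= -zh.
Qed.

Lemma esum_cweight h : \esum_(z in counts h) (cweight D z)%:E = 1.
Proof.
elim: h => [|h IH].
  by rewrite counts0 esum_set1 ?lee_fin ?cweight_ge0 // /cweight big_nil.
rewrite countsS esum_image; last by move=> [n1 z1] [n2 z2] _ _ /= [-> ->].
rewrite -(@esum_esum _ _ _ [set: nat] (fun _ => counts h)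
                     (fun n z => (cweight D (n :: z))%:E)) => [|*]; last first.
  by rewrite lee_fin cweight_ge0.
rewrite -D_sum1; apply: eq_esum => n _.
under eq_esum do rewrite /cweight big_cons EFinM.
by rewrite esumZl // ?IH ?mule1 // => *; rewrite lee_fin cweight_ge0.
Qed.

Lemma cexpect_ge0 h f : (forall z, counts h z -> 0 <= f z) -> 0 <= cexpect h f.
Proof.
by move=> f0; apply: esum_ge0 => z hz; rewrite mule_ge0 ?lee_fin ?cweight_ge0 ?f0.
Qed.

Lemma eq_cexpect h f g :
  (forall z, counts h z -> f z = g z) -> cexpect h f = cexpect h g.
Proof. by move=> fg; apply: eq_esum => z hz; rewrite fg. Qed.

Lemma cexpectD h f g :
  (forall z, counts h z -> 0 <= f z) -> (forall z, counts h z -> 0 <= g z) ->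
  cexpect h (fun z => f z + g z) = cexpect h f + cexpect h g.
Proof.
move=> f0 g0; rewrite /cexpect -esumD => [|z hz|z hz]; last 2 first.
- by rewrite mule_ge0 ?lee_fin ?cweight_ge0 ?f0.
- by rewrite mule_ge0 ?lee_fin ?cweight_ge0 ?g0.
by apply: eq_esum => z hz; rewrite ge0_muleDr ?f0 ?g0.
Qed.

Lemma cexpectZl h c f : (0 <= c)%R -> (forall z, counts h z -> 0 <= f z) ->
  cexpect h (fun z => c%:E * f z) = c%:E * cexpect h f.
Proof.
move=> c0 f0; rewrite /cexpect -esumZl // => [|z hz]; last first.
  by rewrite mule_ge0 ?lee_fin ?cweight_ge0 ?f0.
by apply: eq_esum => z hz; rewrite muleCA.
Qed.

Lemma cexpect_cst h c : (0 <= c)%R -> cexpect h (fun=> c%:E) = c%:E.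
Proof.
move=> c0; rewrite /cexpect; under eq_esum do rewrite muleC.
by rewrite esumZl ?esum_cweight ?mule1 // => *; rewrite lee_fin cweight_ge0.
Qed.

Lemma exchange_cexpect h k (f : seq nat -> seq nat -> \bar R) :
  (forall x y, counts h x -> counts k y -> 0 <= f x y) ->
  cexpect h (fun x => cexpect k (f x)) = cexpect k (fun y => cexpect h (f^~ y)).
Proof.
move=> f0; rewrite /cexpect.
have w0 z : 0 <= (cweight D z)%:E by rewrite lee_fin cweight_ge0.
transitivity (\esum_(x in counts h) \esum_(y in counts k)
                ((cweight D y)%:E * ((cweight D x)%:E * f x y))).
  apply: eq_esum => x hx; rewrite -esumZl ?cweight_ge0 // => [|y hy].
    by apply: eq_esum => y hy; rewrite muleCA.
  by rewrite mule_ge0 ?f0.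
rewrite exchange_esum => [|x y hx hy]; last by rewrite !mule_ge0 ?f0.
apply: eq_esum => y hy; rewrite esumZl ?cweight_ge0 // => x hx.
by rewrite mule_ge0 ?f0.
Qed.

End ChildCounts.

Lemma remove_at_cat j F X :
  (j < size F)%N -> remove_at j (F ++ X) = remove_at j F ++ X.
Proof.
move=> jF; rewrite /remove_at take_cat drop_cat jF -catA; congr (_ ++ _).
case: ltnP => // Fj; rewrite [drop j.+1 F]drop_oversize //.
suff -> : (j.+1 - size F = 0)%N by rewrite drop0.
by apply/eqP; rewrite subn_eq0.
Qed.

Lemma perm_nth_remove_at F i :
  (i < size F)%N -> perm_eq F (nth 0%N F i :: remove_at i F).
Proof.
move=> iF; rewrite -[X in perm_eq X](cat_take_drop i) (drop_nth 0%N iF).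
by rewrite (perm_catCA _ [:: _]).
Qed.

Lemma children_lt z h : h \in children z -> (h < size z)%N.
Proof. by case/flattenP => s /mapP[j]; rewrite mem_iota => /andP[_ jz] -> /nseqP[->]. Qed.

Section Model.
Variables (R : realType) (T : nat) (D : nat -> R) (pT beta : R).
Hypothesis D_ge0 : forall n, (0 <= D n)%R.
Hypothesis D_sum1 : (\esum_(n in [set: nat]) (D n)%:E = 1)%E.
Hypothesis pT_ge0 : 0 <= pT.
Hypothesis pT_le1 : pT <= 1.
Hypothesis beta_ge0 : 0 <= beta.

Local Notation p := (pinf T pT beta).
Local Notation cexp := (cexpect D).

Definition benefit (h t : nat) : R := expR (- (beta * (h + t)%:R)).

Lemma pinf_benefit h t : p h * benefit h t = pT * expR (- (beta * (T + t)%:R)).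
Proof. by rewrite /pinf /benefit -mulrA -expRD !natrD; congr (_ * expR _); ring. Qed.

Lemma pinf_ge0 h : 0 <= p h.
Proof. by rewrite mulr_ge0 ?expR_ge0. Qed.

Lemma pinf_le1 h : (h <= T)%N -> p h <= 1.
Proof.
move=> hT; rewrite -[1]mulr1 ler_pM ?expR_ge0 // expR_le1 oppr_le0.
by rewrite mulr_ge0 // subr_ge0 ler_nat.
Qed.

Definition admissible (F : seq nat) : bool := all (fun h => h <= T)%N F.

Lemma admissible_nth F i : admissible F -> (nth 0%N F i <= T)%N.
Proof.
by move=> /allP FT; case: (ltnP i (size F)) => iF; [apply/FT/mem_nth|rewrite nth_default].
Qed.

Lemma admissible_remove_at i F : admissible F -> admissible (remove_at i F).
Proof.
by move=> /allP FT; apply/allP => x; rewrite mem_cat => /orP[/mem_take|/mem_drop] /FT.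
Qed.

Lemma admissible_children h z : (h <= T)%N -> counts h z -> admissible (children z).
Proof. by move=> hT zh; apply/allP => x /children_lt; rewrite zh => /ltnW/leq_trans; apply. Qed.

Lemma admissible_cat_children S h z :
  admissible S -> (h <= T)%N -> counts h z -> admissible (S ++ children z).
Proof.
move=> ST hT zh; rewrite /admissible all_cat; apply/andP; split=> //.
exact: admissible_children hT zh.
Qed.

Local Open Scope ereal_scope.

(* A continuation [V] maps the current step [t] and frontier [F] to the expected
   benefit collected from step [t] on. *)
Definition query (V : nat -> seq nat -> \bar R) (t h : nat) (S : seq nat) : \bar R :=
  (1 - p h)%:E * V t.+1 S +
  (p h)%:E * ((benefit h t)%:E + cexp h (fun z => V t.+1 (S ++ children z))).

Definition query_at V t F i : \bar R := query V t (nth 0%N F i) (remove_at i F).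

Fixpoint Vfirst (n t : nat) (F : seq nat) : \bar R :=
  match n, F with
  | n'.+1, h :: F' => query (Vfirst n') t h F'
  | _, _ => 0
  end.

Definition nonneg_value (V : nat -> seq nat -> \bar R) :=
  forall t F, admissible F -> 0 <= V t F.

Definition perm_invariant (V : nat -> seq nat -> \bar R) :=
  forall t F G, admissible F -> perm_eq F G -> V t F = V t G.

Lemma query_ge0 V t h S :
  nonneg_value V -> (h <= T)%N -> admissible S -> 0 <= query V t h S.
Proof.
move=> V0 hT ST; rewrite adde_ge0 ?mule_ge0 ?adde_ge0 ?lee_fin ?subr_ge0 ?pinf_le1
  ?pinf_ge0 ?expR_ge0 ?V0 //.
by apply: (cexpect_ge0 D_ge0) => z zh; apply/V0/(admissible_cat_children ST hT zh).
Qed.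

Lemma Vfirst_ge0 n : nonneg_value (Vfirst n).
Proof.
by elim: n => [|n IH] t [|h S] //= /andP[hT ST]; apply: query_ge0.
Qed.

Lemma eq_query V V' t h S S' : V t.+1 S = V' t.+1 S' ->
  (forall z, counts h z -> V t.+1 (S ++ children z) = V' t.+1 (S' ++ children z)) ->
  query V t h S = query V' t h S'.
Proof. by rewrite /query => -> /eq_cexpect ->. Qed.

Lemma query_perm V t h S S' : perm_invariant V ->
  (h <= T)%N -> admissible S -> perm_eq S S' -> query V t h S = query V t h S'.
Proof.
move=> Vperm hT ST SS'; apply: eq_query => [|z zh]; first exact: Vperm.
by apply: Vperm; [exact: admissible_cat_children ST hT zh|rewrite perm_cat2r].
Qed.

Lemma cexpect_query V t h k (S : seq nat -> seq nat) :
  nonneg_value V -> (k <= T)%N -> (forall z, counts h z -> admissible (S z)) ->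
  cexp h (fun z => query V t k (S z)) =
  (1 - p k)%:E * cexp h (fun z => V t.+1 (S z)) +
  (p k)%:E * ((benefit k t)%:E +
              cexp h (fun z => cexp k (fun z' => V t.+1 (S z ++ children z')))).
Proof.
move=> V0 kT ST.
have pk1 : (0 <= 1 - p k)%R by rewrite subr_ge0 pinf_le1.
have VS0 z : counts h z -> 0 <= V t.+1 (S z) by move/ST; apply: V0.
have EV0 z : counts h z -> 0 <= cexp k (fun z' => V t.+1 (S z ++ children z')).
  move=> zh; apply: (cexpect_ge0 D_ge0) => z' z'k.
  exact/V0/(admissible_cat_children (ST _ zh) kT z'k).
rewrite /query cexpectD // => [|z zh|z zh]; last 2 first.
- by rewrite mule_ge0 ?lee_fin ?VS0.
- by rewrite mule_ge0 ?adde_ge0 ?lee_fin ?pinf_ge0 ?expR_ge0 ?EV0.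
rewrite !cexpectZl ?pinf_ge0 // => [|z zh]; last by rewrite adde_ge0 ?lee_fin ?expR_ge0 ?EV0.
by rewrite cexpectD ?cexpect_cst ?expR_ge0 // => z zh; rewrite ?lee_fin ?expR_ge0 ?EV0.
Qed.

Lemma query_query V t a b S : nonneg_value V ->
  (a <= T)%N -> (b <= T)%N -> admissible S ->
  query (fun t' S' => query V t' b S') t a S =
  ((1 - p a) * (1 - p b))%:E * V t.+2 S
  + (p a * benefit a t + p b * benefit b t.+1)%:E
  + ((1 - p a) * p b)%:E * cexp b (fun z => V t.+2 (S ++ children z))
  + (p a * (1 - p b))%:E * cexp a (fun z => V t.+2 (S ++ children z))
  + (p a * p b)%:E *
      cexp a (fun z => cexp b (fun z' => V t.+2 ((S ++ children z) ++ children z'))).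
Proof.
move=> V0 aT bT ST.
have VSc0 h z : (h <= T)%N -> counts h z -> 0 <= V t.+2 (S ++ children z).
  by move=> hT zh; apply/V0/(admissible_cat_children ST hT zh).
rewrite {1}/query cexpect_query // => [|z]; last exact: admissible_cat_children.
rewrite /query nested_mixtureE ?pinf_ge0 ?pinf_le1 ?expR_ge0 ?V0 //.
- by apply: (cexpect_ge0 D_ge0) => z; apply: VSc0.
- by apply: (cexpect_ge0 D_ge0) => z; apply: VSc0.
apply: (cexpect_ge0 D_ge0) => z za; apply: (cexpect_ge0 D_ge0) => z' z'b.
by apply/V0/(admissible_cat_children _ bT z'b)/(admissible_cat_children ST aT za).
Qed.

Lemma query_comm V t a b S : nonneg_value V -> perm_invariant V ->
  (a <= T)%N -> (b <= T)%N -> admissible S ->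
  query (fun t' S' => query V t' b S') t a S =
  query (fun t' S' => query V t' a S') t b S.
Proof.
move=> V0 Vperm aT bT ST; rewrite !query_query //.
(* The only use of alpha = beta: p h * benefit h t does not depend on h. *)
have -> : (p a * benefit a t + p b * benefit b t.+1 =
           p b * benefit b t + p a * benefit a t.+1)%R by rewrite !pinf_benefit addrC.
rewrite exchange_cexpect // => [|x y xa yb]; last first.
  by apply/V0/(admissible_cat_children _ bT yb)/(admissible_cat_children ST aT xa).
rewrite [X in _ = X + _]addeAC.
congr (_ + _ + _ + _ + _); congr (_%:E * _); try exact: mulrC.
apply: eq_cexpect => y yb; apply: eq_cexpect => x xa; apply: Vperm.
  exact/(admissible_cat_children _ bT yb)/(admissible_cat_children ST aT xa).
by rewrite perm_catAC.
Qed.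

Lemma query_Vfirst0 t h S :
  query (Vfirst 0) t h S = (pT * expR (- (beta * (T + t)%:R)))%:E.
Proof.
rewrite /query /= mule0 add0e (@eq_cexpect _ _ _ _ (fun=> 0%:E)) // cexpect_cst //.
by rewrite adde0 -EFinM pinf_benefit.
Qed.

Section FirstNodeInduction.
Variable n : nat.
Hypothesis IHperm : perm_invariant (Vfirst n).
Hypothesis IHquery : forall t F i, admissible F -> (i < size F)%N ->
  query_at (Vfirst n) t F i = Vfirst n.+1 t F.

Lemma Vfirst_perm_succ : perm_invariant (Vfirst n.+1).
Proof.
move=> t [|x S] G FT FG; first by have := perm_size FG; case: G FG.
have xG : x \in G by rewrite -(perm_mem FG) mem_head.
have xGG : (index x G < size G)%N by rewrite index_mem.
have GT : admissible G by rewrite /admissible -(perm_all _ FG).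
rewrite -(IHquery t GT xGG) /query_at nth_index //.
case/andP: FT => xT ST; apply: query_perm => //.
rewrite -(perm_cons x) (perm_trans FG) //.
by have := perm_nth_remove_at xGG; rewrite nth_index.
Qed.

Lemma query_at_Vfirst_succ t F i : admissible F -> (i < size F)%N ->
  query_at (Vfirst n.+1) t F i = Vfirst n.+2 t F.
Proof.
case: F i => [|x F] [|j] // /andP[xT FT]; first by rewrite /query_at /remove_at /= drop0.
rewrite ltnS => jF.
set y := nth 0%N F j; set S := remove_at j F.
have yT : (y <= T)%N := admissible_nth j FT.
have ST : admissible S := admissible_remove_at j FT.
have Vfirst_cat X :
    admissible X -> Vfirst n.+1 t.+1 (F ++ X) = query (Vfirst n) t.+1 y (S ++ X).
  move=> XT; rewrite -(IHquery _ (i := j)) ?size_cat ?ltn_addr //.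
    by rewrite /query_at nth_cat jF remove_at_cat.
  by rewrite /admissible all_cat; apply/andP.
transitivity (query (fun t' S' => query (Vfirst n) t' x S') t y S); first by [].
rewrite query_comm //; [|exact: Vfirst_ge0].
apply: (@eq_query _ (Vfirst n.+1)) => [|z zh].
  by rewrite -[in RHS](cats0 F) Vfirst_cat // cats0.
by rewrite Vfirst_cat //; apply: admissible_children xT zh.
Qed.

End FirstNodeInduction.

Lemma Vfirst_perm_query_at n : perm_invariant (Vfirst n) /\
  forall t F i, admissible F -> (i < size F)%N ->
    query_at (Vfirst n) t F i = Vfirst n.+1 t F.
Proof.
elim: n => [|n [Vperm Vquery]].
  by split=> // t [|x F] i // _ _; rewrite /query_at /= !query_Vfirst0.
by split; [exact: Vfirst_perm_succ | exact: query_at_Vfirst_succ].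
Qed.

Lemma query_at_Vfirst n t F i : admissible F -> (i < size F)%N ->
  query_at (Vfirst n) t F i = Vfirst n.+1 t F.
Proof. exact: (proj2 (Vfirst_perm_query_at n)). Qed.

Lemma Vn_Vfirst pi n hist F : valid_policy pi -> admissible F ->
  Vn T D pT beta beta pi n hist F = Vfirst n (size hist) F.
Proof.
move=> pi_valid; elim: n hist F => [|n IH] hist [|x S] FT //.
have iF : (pi hist (x :: S) < size (x :: S))%N by apply: pi_valid.
rewrite -(query_at_Vfirst n (size hist) FT iF) /=.
set F := x :: S in FT iF *; set i := pi hist F in iF *.
have RT : admissible (remove_at i F) := admissible_remove_at i FT.
rewrite IH // size_rcons; congr (_ + _ * (_ + _)); apply: eq_esum => z zh.
by rewrite IH ?size_rcons //; apply: admissible_cat_children RT (admissible_nth i FT) zh.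
Qed.

Lemma value_Vfirst pi F : valid_policy pi -> admissible F ->
  value T D pT beta beta pi F = ereal_sup (range (fun n => Vfirst n 0 F)).
Proof.
move=> pi_valid FT; rewrite /value (_ : (fun n => _) = (fun n => Vfirst n 0 F)) //.
by apply: funext => n; rewrite Vn_Vfirst.
Qed.

End Model.

Theorem theorem6p4 (R : realType) (T : nat) (D : nat -> R) (pT alpha beta : R) :
  prob_distr D -> 0 < pT -> pT <= 1 -> 0 < beta -> alpha = beta ->
  forall pi : policy, valid_policy pi -> optimal T D pT alpha beta pi.
Proof.
move=> [D_ge0 D_sum1] pT_gt0 pT_le1 beta_gt0 -> pi pi_valid.
split => // F FT pi' pi'_valid.
by rewrite !(value_Vfirst D_ge0 D_sum1 (ltW pT_gt0) pT_le1 (ltW beta_gt0)).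
Qed.
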